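(* Let $n,m,r$ satisfy $r \ge 16 \log n$. If there exists an $n$-vertex $(m,r)$-locally Ramsey graph, then there exists a graph which is both $\left(m,\frac{r}{17 \log n}\right)$-locally Ramsey and $(r/2,2)$-locally Ramsey.
   Context: All logarithms are base $2$. For a graph $G$ and reals $m,r>0$ (not necessarily integers), $G$ is called $(m,r)$-locally Ramsey if every set of at least $m$ vertices of $G$ contains both a clique and an independent set of size at least $r$. (In particular, $(s,2)$-locally Ramsey means every set of at least $s$ vertices contains both an edge and a non-edge.) *)

From Stdlib Require Import Reals.
From mathcomp Require Import all_boot.
Set Implicit Arguments.
Local Open Scope R_scope. Unset Strict Implicit. Unset Printing Implicit Defensive.

Definition log2 (x : R) : R := ln x / ln 2.

Definition simple_graph (T : finType) (e : rel T) : Prop :=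
  symmetric e /\ irreflexive e.

Definition is_clique (T : finType) (e : rel T) (K : {set T}) : Prop :=
  {in K &, forall x y, x != y -> e x y}.

Definition is_indep (T : finType) (e : rel T) (I : {set T}) : Prop :=
  {in I &, forall x y, x != y -> ~~ e x y}.

Definition locally_ramsey (T : finType) (e : rel T) (m r : R) : Prop :=
  forall S : {set T}, m <= INR #|S| ->
    (exists K : {set T}, K \subset S /\ is_clique e K /\ r <= INR #|K|) /\
    (exists I : {set T}, I \subset S /\ is_indep e I /\ r <= INR #|I|).

(* Colour every pair of vertices with one of N ~ r / (3.5 log n) colours and, for two
   colours a0 and a1, add the pairs of colour a0 to the graph and delete those of colour a1.
   Counting colourings shows that some colouring has two properties.  First, every set of
   ceil(r/2) vertices contains a pair of each of the two colours, which makes the new graph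
   (r/2, 2)-locally Ramsey.  Second, no set W of at most ceil(r) vertices spans |W| d / 2
   pairs of colour a0, or of colour a1, with d ~ 17 log n; so both colour classes are
   (d-1)-degenerate on such sets.
   Hence a clique K of size ceil(r) of the old graph contains a set of |K| / d vertices
   without a pair of colour a1, and this set is a clique of the new graph; independent sets
   are handled in the same way with a0. *)

From Stdlib Require Import Reals Lra Lia Psatz ZArith.
From mathcomp Require Import all_boot zify.

Set Implicit Arguments.
Unset Strict Implicit.

Lemma exists_subset_card (T : finType) (A : {set T}) k :
  k <= #|A| -> exists2 B : {set T}, B \subset A & #|B| = k.
Proof.
move=> hk.
have : 0 < #|[set B : {set T} | B \subset A & #|B| == k]| by rewrite cards_draws bin_gt0.
by case/card_gt0P=> B; rewrite inE => /andP[sBA /eqP hB]; exists B.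
Qed.

Lemma card_exists_le (I T : finType) (P : pred I) (Q : I -> pred T) :
  #|[set x | [exists i, P i && Q i x]]| <= \sum_(i | P i) #|Q i|.
Proof.
apply: (@leq_trans #|\bigcup_(i | P i) [set x | Q i x]|).
  apply/subset_leq_card/subsetP => x; rewrite inE => /existsP[i /andP[Pi Qix]].
  by apply/bigcupP; exists i; rewrite ?inE.
elim/big_rec2: _ => [|i c X _ hX]; first by rewrite cards0.
apply: leq_trans (leq_card_setU _ _) _.
by rewrite leq_add // (eq_card (in_set (Q i))).
Qed.

Lemma card_ffun_forall_in (aT rT : finType) (F : {set aT}) (P : pred rT) :
  #|[set f : {ffun aT -> rT} | [forall x in F, P (f x)]]| * #|rT| ^ #|F|
  = #|P| ^ #|F| * #|rT| ^ #|aT|.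
Proof.
pose D x : pred rT := if x \in F then P else predT.
have -> : #|[set f : {ffun aT -> rT} | [forall x in F, P (f x)]]| = #|family D|.
  apply: eq_card => f; rewrite inE; apply/forall_inP/familyP => hf x;
  by have := hf x; rewrite /D; case: (x \in F) => // h; apply: h.
rewrite card_family foldrE big_map big_enum /= (bigID (mem F)) /=.
have -> : \prod_(x in F) #|D x| = #|P| ^ #|F|.
  by rewrite -prod_nat_const; apply: eq_bigr => x hx; rewrite /D hx.
have -> : \prod_(x | x \notin F) #|D x| = #|rT| ^ #|~: F|.
  rewrite -prod_nat_const; apply: eq_big => [x|x hx]; first by rewrite inE.
  by rewrite /D (negbTE hx); apply: eq_card.
by rewrite -mulnA -expnD addnC cardsC.
Qed.

Lemma card_ffun_forall_eq (aT rT : finType) (F : {set aT}) (a : rT) :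
  #|[set f : {ffun aT -> rT} | [forall x in F, f x == a]]| = #|rT| ^ (#|aT| - #|F|).
Proof.
have rT0 : 0 < #|rT| by apply/card_gt0P; exists a.
have h := card_ffun_forall_in F (pred1 a).
rewrite (card1 a) exp1n mul1n -[in RHS](subnK (max_card F)) expnD in h.
move/eqP: h; rewrite eqn_pmul2r ?expn_gt0 ?rT0 // => /eqP <-.
by apply: eq_card => f; rewrite !inE.
Qed.

Lemma sum_set_by_card (T : finType) (P : pred nat) (h : nat -> nat) :
  \sum_(W : {set T} | P #|W|) h #|W| = \sum_(w < #|T|.+1 | P w) 'C(#|T|, w) * h w.
Proof.
have cardW (W : {set T}) : #|W| < #|T|.+1 by rewrite ltnS max_card.
rewrite (partition_big (fun W : {set T} => inord #|W|) (fun w : 'I_#|T|.+1 => P w)) /=;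
  last by move=> W PW; rewrite inordK.
apply: eq_bigr => w Pw.
rewrite (eq_bigr (fun _ => h w)) => [|W /andP[_ /eqP <-]]; last by rewrite inordK.
rewrite sum_nat_const -card_draws; congr (_ * _); apply: eq_card => W; rewrite !inE.
apply/andP/eqP => [[_ /eqP <-]|hW]; first by rewrite inordK.
by split; [rewrite hW | apply/eqP/val_inj; rewrite /= inordK hW].
Qed.

Lemma sum_card_incident (T : finType) (E : {set {set T}}) :
  \sum_v #|[set A in E | v \in A]| = \sum_(A in E) #|A|.
Proof.
under eq_bigr => v _ do rewrite -sum1_card big_mkcond /=.
rewrite exchange_big [RHS]big_mkcond /=; apply: eq_bigr => A _.
under eq_bigr => v _ do rewrite inE.
case: (A \in E) => /=; first by rewrite -big_mkcond sum1_card.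
by rewrite big1.
Qed.

Lemma ffact_leq_expn n k : n ^_ k <= n ^ k.
Proof.
rewrite ffact_prod -[in X in _ <= n ^ X](card_ord k) -prod_nat_const.
by apply: leq_prod => i _; apply: leq_subr.
Qed.

Lemma bin2_mul2 s : 'C(s, 2) * 2 = s * s.-1.
Proof. by have := bin_ffact s 2; rewrite ffactnS ffactn1 => <-. Qed.

Lemma pair_clique (T : finType) (R : rel T) u v :
  symmetric R -> R u v -> is_clique R [set u; v].
Proof.
move=> symR Ruv x y; rewrite !inE => /orP[/eqP->|/eqP->] /orP[/eqP->|/eqP->];
  by rewrite ?eqxx // => _; rewrite // symR.
Qed.

Lemma pair_indep (T : finType) (R : rel T) u v :
  symmetric R -> ~~ R u v -> is_indep R [set u; v].
Proof.
move=> symR Ruv x y; rewrite !inE => /orP[/eqP->|/eqP->] /orP[/eqP->|/eqP->];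
  by rewrite ?eqxx // => _; rewrite // symR.
Qed.

Definition degenerate_on (T : finType) (Y : rel T) (d : nat) (K : {set T}) :=
  forall W : {set T}, W \subset K -> W != set0 ->
    exists2 v, v \in W & #|[set u in W | Y v u]| < d.

Lemma degenerate_indep (T : finType) (Y : rel T) (d : nat) (K : {set T}) :
  symmetric Y -> degenerate_on Y d K ->
  exists2 I : {set T}, I \subset K & is_indep Y I /\ #|K| <= #|I| * d.
Proof.
(* Greedily keep a vertex of small degree, discard its neighbours, and recurse. *)
move=> symY; elim: {K}_.+1 {-2}K (ltnSn #|K|) => // c IH K hKc degK.
have [->|K0] := eqVneq K set0.
  by exists set0; rewrite ?sub0set ?cards0 //; split=> // x y; rewrite inE.
have [v vK hv] := degK K (subxx K) K0.
set Nv := [set u in K | Y v u] in hv.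
set K' := K :\: (v |: Nv).
have sK'K : K' \subset K := subsetDl _ _.
have vK' : v \notin K' by rewrite !inE eqxx.
have [|I sIK' [indI hI]] := IH K' _ (fun W sWK' => degK W (subset_trans sWK' sK'K)).
  have : #|K'| < #|K| by apply/proper_card/properP; split=> //; exists v.
  by move=> hK'; apply: leq_trans hK' _; rewrite -ltnS.
have vI : v \notin I by apply: contra vK'; apply: (subsetP sIK').
have vY y : y \in I -> ~~ Y v y.
  move=> /(subsetP sIK'); rewrite !inE negb_or => /andP[/andP[_ yNv] yK].
  by move: yNv; rewrite yK.
exists (v |: I); first by rewrite subUset sub1set vK (subset_trans sIK' sK'K).
split.
  move=> x y; rewrite !inE => /orP[/eqP->|xI] /orP[/eqP->|yI]; rewrite ?eqxx //.
  - by move=> _; apply: vY.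
  - by move=> _; rewrite symY; apply: vY.
  - exact: indI.
have hK := cardsID (v |: Nv) K; rewrite -/K' in hK.
have hvN : #|K :&: (v |: Nv)| <= (#|Nv|).+1.
  by apply: leq_trans (subset_leq_card (subsetIr _ _)) _; rewrite cardsU1; case: (v \notin Nv).
rewrite cardsU1 vI mulSn -hK.
by apply: leq_add => //; apply: leq_trans hvN hv.
Qed.

(* A colouring of the pairs of vertices is a function on all subsets of [T]; only its
   values on 2-element sets matter. *)
Section Colourings.
Variables T C : finType.
Implicit Types (f : {ffun {set T} -> C}) (a : C) (S W K : {set T}).

Definition pairs S : {set {set T}} := [set A : {set T} | A \subset S & #|A| == 2].

Lemma card_pairs S : #|pairs S| = 'C(#|S|, 2).
Proof. exact: cards_draws. Qed.

Definition colour_graph f a : rel T := fun u v => (u != v) && (f [set u; v] == a).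

Lemma colour_graph_sym f a : symmetric (colour_graph f a).
Proof. by move=> u v; rewrite /colour_graph eq_sym setUC. Qed.

Lemma colour_degree_le f a W v : v \in W ->
  #|[set u in W | colour_graph f a v u]|
    <= #|[set A in [set A in pairs W | f A == a] | v \in A]|.
Proof.
move=> vW; rewrite -(@card_in_imset _ _ (fun u => [set v; u])); last first.
  move=> u1 u2; rewrite !inE => /andP[_ /andP[u1v _]] /andP[_ /andP[u2v _]] e12.
  have : u1 \in [set v; u2] by rewrite -e12 set22.
  by rewrite !inE eq_sym (negbTE u1v) => /eqP.
apply/subset_leq_card/subsetP => A /imsetP[u]; rewrite !inE => /andP[uW /andP[vu fa]] ->.
by rewrite subUset !sub1set vW uW cards2 vu fa set21.
Qed.

Lemma sum_colour_degree_le f a W :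
  \sum_(v in W) #|[set u in W | colour_graph f a v u]|
    <= 2 * #|[set A in pairs W | f A == a]|.
Proof.
set E := [set A in pairs W | f A == a].
apply: (@leq_trans (\sum_v #|[set A in E | v \in A]|)).
  rewrite [X in _ <= X](bigID (mem W)) /=; apply: leq_trans (leq_addr _ _).
  by apply: leq_sum => v; apply: colour_degree_le.
rewrite sum_card_incident -sum1_card big_distrr /=.
by apply: eq_leq; apply: eq_bigr => A; rewrite !inE muln1 => /andP[/andP[_ /eqP]].
Qed.

Definition colour_avoiding s a := [set f : {ffun {set T} -> C} |
  [exists S : {set T}, (#|S| == s) && [forall A in pairs S, f A != a]]].

(* The witness [F] has exactly ceil(|W| d / 2) pairs, so that these colourings can be
   counted. *)
Definition colour_dense k d a := [set f : {ffun {set T} -> C} |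
  [exists W : {set T}, (0 < #|W| <= k) &&
    [exists F : {set {set T}}, (F \subset pairs W) && (#|F| == uphalf (#|W| * d))
                                && [forall A in F, f A == a]]]].

Lemma card_colour_avoiding s a :
  #|colour_avoiding s a| * #|C| ^ 'C(s, 2)
    <= 'C(#|T|, s) * (#|C|.-1 ^ 'C(s, 2) * #|C| ^ #|{: {set T}}|).
Proof.
have hu := card_exists_le (fun S : {set T} => #|S| == s)
  (fun S (f : {ffun {set T} -> C}) => [forall A in pairs S, f A != a]).
apply: leq_trans (leq_mul hu (leqnn _)) _.
rewrite big_distrl /= -card_draws -sum_nat_const.
apply/eq_leq/eq_big => [S|S /eqP hS]; first by rewrite inE.
have := card_ffun_forall_in (pairs S) (predC1 a).
rewrite cardC1 card_pairs hS => <-.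
by congr (_ * _); apply: eq_card => f; rewrite inE.
Qed.

Lemma card_colour_dense k d a :
  #|colour_dense k d a|
    <= \sum_(w < #|T|.+1 | 0 < w <= k)
         'C(#|T|, w) * ('C('C(w, 2), uphalf (w * d))
                        * #|C| ^ (#|{: {set T}}| - uphalf (w * d))).
Proof.
apply: leq_trans (card_exists_le _ _) _.
rewrite -(sum_set_by_card T (fun w => 0 < w <= k)
  (fun w => 'C('C(w, 2), uphalf (w * d)) * #|C| ^ (#|{: {set T}}| - uphalf (w * d)))).
apply: leq_sum => W _.
rewrite -cardsE; apply: leq_trans (card_exists_le _ _) _.
rewrite (eq_bigr (fun _ => #|C| ^ (#|{: {set T}}| - uphalf (#|W| * d)))); last first.
  move=> F /andP[_ /eqP <-]; rewrite -(card_ffun_forall_eq _ a).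
  by apply: eq_card => f; rewrite inE.
rewrite sum_nat_const -card_pairs -cards_draws; apply/eq_leq; congr (_ * _).
by apply: eq_card => F; rewrite inE.
Qed.

Lemma colour_avoiding_rare s a :
  16 * 'C(#|T|, s) * #|C|.-1 ^ 'C(s, 2) <= #|C| ^ 'C(s, 2) ->
  16 * #|colour_avoiding s a| <= #|C| ^ #|{: {set T}}|.
Proof.
move=> hs; have C0 : 0 < #|C| by apply/card_gt0P; exists a.
rewrite -(@leq_pmul2r (#|C| ^ 'C(s, 2))) ?expn_gt0 ?C0 // -mulnA.
apply: leq_trans (leq_mul (leqnn 16) (card_colour_avoiding s a)) _.
by rewrite !mulnA [X in _ <= X]mulnC leq_mul2r hs orbT.
Qed.

Lemma colour_dense_rare k d a :
  0 < #|T| ->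
  (forall w, 0 < w <= k ->
     8 * #|T| * 'C(#|T|, w) * 'C('C(w, 2), uphalf (w * d)) <= #|C| ^ uphalf (w * d)) ->
  8 * #|colour_dense k d a| <= #|C| ^ #|{: {set T}}|.
Proof.
move=> T0 hk; set P := #|{: {set T}}|.
have term (w : 'I_#|T|.+1) : 0 < w <= k ->
    8 * #|T| * ('C(#|T|, w) * ('C('C(w, 2), uphalf (w * d)) * #|C| ^ (P - uphalf (w * d))))
      <= #|C| ^ P.
  move=> /andP[w0 wk]; have wT : w <= #|T| by rewrite -ltnS.
  set E := uphalf (w * d).
  have [EM|/bin_small->] := leqP E 'C(w, 2); last by rewrite !muln0.
  have EP : E <= P.
    apply: leq_trans EM (leq_trans (leq_bin2l 2 wT) _).
    by rewrite -cardsT -card_pairs max_card.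
  rewrite -{2}(subnK EP) expnD !mulnA [X in _ <= X]mulnC leq_mul2r.
  by rewrite hk ?w0 ?orbT.
rewrite -(@leq_pmul2l #|T|) // mulnA [_ * 8]mulnC.
apply: leq_trans (leq_mul (leqnn _) (card_colour_dense k d a)) _.
rewrite big_distrr /=.
apply: leq_trans (@leq_sum _ _ _ _ _ term) _.
rewrite sum_nat_const leq_mul2r; apply/orP; right.
apply: (@leq_trans #|predC1 (@ord0 #|T|)|); last by rewrite cardC1 card_ord.
apply/subset_leq_card/subsetP => w; rewrite !inE => /andP[w0 _].
by apply: contraTneq w0 => ->.
Qed.

Lemma exists_good_colouring s k d (a0 a1 : C) :
  0 < #|T| ->
  16 * 'C(#|T|, s) * #|C|.-1 ^ 'C(s, 2) <= #|C| ^ 'C(s, 2) ->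
  (forall w, 0 < w <= k ->
     8 * #|T| * 'C(#|T|, w) * 'C('C(w, 2), uphalf (w * d)) <= #|C| ^ uphalf (w * d)) ->
  exists f, [/\ f \notin colour_avoiding s a0, f \notin colour_avoiding s a1,
                f \notin colour_dense k d a0 & f \notin colour_dense k d a1].
Proof.
move=> T0 hs hk.
set bad := colour_avoiding s a0 :|: colour_avoiding s a1
           :|: colour_dense k d a0 :|: colour_dense k d a1.
have : 0 < #|~: bad|.
  have A0 := colour_avoiding_rare a0 hs; have A1 := colour_avoiding_rare a1 hs.
  have D0 := colour_dense_rare a0 T0 hk; have D1 := colour_dense_rare a1 T0 hk.
  have hbad : #|bad| <= #|colour_avoiding s a0| + #|colour_avoiding s a1|
                        + #|colour_dense k d a0| + #|colour_dense k d a1|.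
    by do 3 (apply: leq_trans (leq_card_setU _ _) _; rewrite leq_add2r).
  have C0 : 0 < #|C| ^ #|{: {set T}}|.
    by rewrite expn_gt0; apply/orP; left; apply/card_gt0P; exists a0.
  (* [set] merges the two syntactic forms of [#|{set T}|], so that [lia] sees a single atom. *)
  have := cardsC bad; rewrite card_ffun; move: C0; set N := #|C| ^ _; lia.
case/card_gt0P=> f; rewrite in_setC !in_setU !negb_or => /andP[/andP[/andP[hA0 hA1] hD0] hD1].
by exists f.
Qed.

Lemma colour_edge_in_large_set s a f : f \notin colour_avoiding s a ->
  forall S, s <= #|S| -> exists u v, [/\ u \in S, v \in S & colour_graph f a u v].
Proof.
move=> hf S sS; have [S0 sS0S /eqP S0s] := exists_subset_card sS.
have [A AS0 fA] : exists2 A, A \in pairs S0 & f A == a.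
  apply/exists_inP; apply: contraR hf => hA; rewrite inE; apply/existsP; exists S0.
  rewrite S0s; apply/forall_inP => A AS0; apply: contraNneq hA => fA.
  by apply/exists_inP; exists A => //; apply/eqP.
move: AS0; rewrite inE => /andP[AS0 /cards2P[u [v [uv eA]]]].
have [uS0 vS0] : u \in S0 /\ v \in S0.
  by split; apply: (subsetP AS0); rewrite eA !inE eqxx ?orbT.
by exists u, v; split; [apply: (subsetP sS0S) .. | rewrite /colour_graph uv -eA].
Qed.

Lemma colour_sparse_degenerate k d a f : f \notin colour_dense k d a ->
  forall K, #|K| <= k -> degenerate_on (colour_graph f a) d K.
Proof.
move=> hf K Kk W sWK W0.
case: (boolP [exists v in W, #|[set u in W | colour_graph f a v u]| < d]).
  by case/exists_inP=> v vW hv; exists v.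
rewrite negb_exists_in => /forall_inP hW.
have hE : uphalf (#|W| * d) <= #|[set A in pairs W | f A == a]|.
  rewrite uphalfE leq_half_double ltnS -mul2n.
  apply: leq_trans (sum_colour_degree_le f a W); rewrite -sum_nat_const.
  by apply: leq_sum => v /hW; rewrite -leqNgt.
have [F sFE hF] := exists_subset_card hE.
case/negP: hf; rewrite inE; apply/existsP; exists W.
rewrite card_gt0 W0 (leq_trans (subset_leq_card sWK) Kk) /=.
apply/existsP; exists F; rewrite hF eqxx andbT.
apply/andP; split.
  by apply: (subset_trans sFE); apply/subsetP => A; rewrite inE => /andP[].
by apply/forall_inP => A /(subsetP sFE); rewrite inE => /andP[].
Qed.

End Colourings.

Arguments colour_avoiding {T C} s a.
Arguments colour_dense {T C} k d a.

Local Open Scope R_scope.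

Lemma INR_muln a b : INR (a * b) = INR a * INR b.
Proof. exact: mult_INR. Qed.

Lemma INR_expn a b : INR (a ^ b) = INR a ^ b.
Proof. by elim: b => [|b IH] //=; rewrite expnS INR_muln IH. Qed.

Lemma INR_leq a b : (a <= b)%N -> INR a <= INR b.
Proof. by move/leP; apply: le_INR. Qed.

Lemma leq_INR a b : INR a <= INR b -> (a <= b)%N.
Proof. by move/INR_le/leP. Qed.

Lemma INR_pred N : (0 < N)%N -> INR N.-1 = INR N - 1.
Proof. by case: N => // N _; rewrite S_INR /=; lra. Qed.

Lemma INR_bin2 s : INR 'C(s, 2) = INR s * (INR s - 1) / 2.
Proof.
have := congr1 INR (bin2_mul2 s); rewrite !INR_muln.
case: s => [|s]; first by rewrite /=; lra.
by rewrite INR_pred // /=; lra.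
Qed.

Lemma INR_fact_gt0 k : 0 < INR k`!.
Proof. exact/lt_0_INR/ltP/fact_gt0. Qed.

Lemma exists_floor_nat x : 0 <= x -> exists N : nat, INR N <= x < INR N + 1.
Proof.
move=> x0; have [h1 h2] := base_Int_part x.
have hz : (-1 < Int_part x)%Z by apply: lt_IZR; lra.
by exists (Z.to_nat (Int_part x)); rewrite INR_IZR_INZ Z2Nat.id; [lra | lia].
Qed.

Lemma exists_ceil_nat x : 0 <= x -> exists k : nat, x <= INR k < x + 1.
Proof.
move=> x0; have [N [h1 h2]] := exists_floor_nat x0.
have [eN|neN] := Req_dec (INR N) x; first by exists N; lra.
by exists N.+1; rewrite S_INR; lra.
Qed.

Lemma leq_of_ceil (k j : nat) x : INR k < x + 1 -> x <= INR j -> (k <= j)%N.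
Proof. by move=> hk hj; have /INR_lt/ltP : INR k < INR j.+1 by rewrite S_INR; lra. Qed.

Lemma exp_pow x n : exp x ^ n = exp (INR n * x).
Proof.
elim: n => [|n IH]; first by rewrite /= Rmult_0_l exp_0.
by rewrite S_INR /= IH -exp_plus; congr exp; ring.
Qed.

Lemma pow_exp_ln x n : 0 < x -> x ^ n = exp (INR n * ln x).
Proof. by move=> x0; rewrite -exp_pow exp_ln. Qed.

Lemma exp_le x y : x <= y -> exp x <= exp y.
Proof. by move=> [xy|<-]; [left; apply: exp_increasing | right]. Qed.

Lemma ln_le x y : 0 < x -> x <= y -> ln x <= ln y.
Proof. by move=> x0 [xy|<-]; [left; apply: ln_increasing | right]. Qed.

Lemma ln2_gt0 : 0 < ln 2.
Proof. by have := ln_lt_2; lra. Qed.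

Lemma ln2_le : ln 2 <= 3 / 4.
Proof.
rewrite -[3 / 4](ln_exp (3 / 4)); apply: ln_le; first lra.
rewrite -[3 / 4](_ : INR 8 * (3 / 32) = _) -?exp_pow; last by rewrite /=; lra.
apply: Rle_trans (_ : (1 + 3 / 32) ^ 8 <= _); first by rewrite /=; lra.
by apply: pow_incr; split; [lra | exact: exp_ineq1_le].
Qed.

Lemma ln_105_128_le : ln (105 / 128) <= - ln 2 / 4.
Proof.
have : ln ((105 / 128) ^ 8) <= ln ((/ 2) ^ 2).
  by apply: ln_le; [apply: pow_lt | rewrite /=]; lra.
by rewrite !ln_pow ?ln_Rinv /=; lra.
Qed.

Lemma log2_ge1 n : (2 <= n)%N -> 1 <= log2 (INR n).
Proof.
move=> n2; have l2 := ln2_gt0.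
rewrite /log2; apply: (Rmult_le_reg_r (ln 2)) => //.
rewrite /Rdiv Rmult_assoc Rinv_l ?Rmult_1_r ?Rmult_1_l; last lra.
by apply: ln_le; [lra | have := INR_leq n2; rewrite /=; lra].
Qed.

Lemma fact_ge4 s : (4 <= s)%N -> 24 <= INR s`!.
Proof. by move/leq_fact/INR_leq; rewrite [INR 4`!]/=; lra. Qed.

Lemma bin_le_pow_div_fact n k : INR 'C(n, k) <= INR n ^ k / INR k`!.
Proof.
have f0 := INR_fact_gt0 k.
apply: (Rmult_le_reg_r _ _ _ f0); rewrite /Rdiv Rmult_assoc Rinv_l ?Rmult_1_r; last lra.
by rewrite -INR_muln bin_ffact -INR_expn; apply/INR_leq/ffact_leq_expn.
Qed.

Lemma bin_le_pow_ge4 n k : (4 <= k)%N -> 24 * INR 'C(n, k) <= INR n ^ k.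
Proof.
move=> k4; have f0 := INR_fact_gt0 k; have := pos_INR 'C(n, k); have := fact_ge4 k4.
move: (bin_le_pow_div_fact n k) => /(Rmult_le_compat_r _ _ _ (Rlt_le _ _ f0)).
rewrite /Rdiv Rmult_assoc Rinv_l ?Rmult_1_r; nra.
Qed.

Lemma succ_pow_le_exp_pow k : (INR k + 1) ^ k <= exp 1 * INR k ^ k.
Proof.
have e1 := exp_ineq1_le 1.
case: k => [|k]; first by rewrite /=; lra.
set x := INR k.+1; have x0 : 0 < x by apply: lt_0_INR; lia.
have -> : x + 1 = x * (1 + / x) by field; lra.
rewrite Rpow_mult_distr Rmult_comm; apply: Rmult_le_compat_r; first by apply: pow_le; lra.
have -> : exp 1 = exp (/ x) ^ k.+1 by rewrite exp_pow -/x Rinv_r; lra.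
by apply: pow_incr; split; [have := Rinv_0_lt_compat x x0; lra | exact: exp_ineq1_le].
Qed.

Lemma pow_le_exp_mul_fact k : INR k ^ k <= exp (INR k) * INR k`!.
Proof.
elim: k => [|k IH]; first by rewrite /= exp_0; lra.
rewrite factS INR_muln S_INR exp_plus /=.
have k1 : 0 <= INR k + 1 by have := pos_INR k; lra.
have e1 : 0 <= exp 1 by have := exp_pos 1; lra.
apply: Rle_trans (Rmult_le_compat_l _ _ _ k1 (succ_pow_le_exp_pow k)) _.
have := Rmult_le_compat_l _ _ _ (Rmult_le_pos _ _ k1 e1) IH.
lra.
Qed.

Lemma bin_le_exp_ratio_pow M E : (0 < E)%N -> INR 'C(M, E) <= (exp 1 * INR M / INR E) ^ E.
Proof.
move=> E0; have e0 : 0 < INR E by apply: lt_0_INR; lia.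
have f0 := INR_fact_gt0 E; have p0 : 0 < INR E ^ E by apply: pow_lt.
have m0 : 0 <= INR M ^ E by apply/pow_le/pos_INR.
apply: Rle_trans (bin_le_pow_div_fact M E) _.
rewrite /Rdiv !Rpow_mult_distr pow_inv exp_pow Rmult_1_r.
apply: (Rmult_le_reg_r (INR E`! * INR E ^ E)); first by apply: Rmult_lt_0_compat.
have -> : INR M ^ E * / INR E`! * (INR E`! * INR E ^ E) = INR M ^ E * INR E ^ E.
  by field; lra.
have -> : exp (INR E) * INR M ^ E * / INR E ^ E * (INR E`! * INR E ^ E)
          = INR M ^ E * (exp (INR E) * INR E`!) by field; lra.
exact: Rmult_le_compat_l (pow_le_exp_mul_fact E).
Qed.

Lemma pred_pow_le_exp N M : (0 < N)%N ->
  INR N.-1 ^ M <= INR N ^ M * exp (- (INR M / INR N)).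
Proof.
move=> N0; have n0 : 0 < INR N by apply: lt_0_INR; lia.
rewrite INR_pred // -[INR N - 1](_ : INR N * (1 - / INR N) = _); last by field; lra.
rewrite Rpow_mult_distr; apply: Rmult_le_compat_l; first by apply: pow_le; lra.
rewrite -[- _](_ : INR M * - / INR N = _) -?exp_pow; last by field; lra.
apply: pow_incr; split; last by have := exp_ineq1_le (- / INR N); lra.
have : / INR N <= 1.
  by rewrite -Rinv_1; apply: Rinv_le_contravar; have := INR_leq N0; rewrite /=; lra.
lra.
Qed.

Lemma avoiding_rare_condition n N s : (0 < n)%N -> (0 < N)%N -> (4 <= s)%N ->
  2 * INR N * ln (INR n) <= INR s - 1 ->
  (16 * 'C(n, s) * N.-1 ^ 'C(s, 2) <= N ^ 'C(s, 2))%N.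
Proof.
move=> n0 N0 s4 hs; apply: leq_INR; rewrite !INR_muln !INR_expn.
have n0R : 0 < INR n by apply: lt_0_INR; lia.
have N0R : 0 < INR N by apply: lt_0_INR; lia.
set M := 'C(s, 2).
have hC : 16 * INR 'C(n, s) <= INR n ^ s.
  by have := bin_le_pow_ge4 n s4; have := pos_INR 'C(n, s); lra.
have hexp : INR n ^ s * exp (- (INR M / INR N)) <= 1.
  rewrite pow_exp_ln // -exp_plus -exp_0; apply: exp_le.
  have := Rmult_le_compat_l _ _ _ (pos_INR s) hs.
  have y0 : 0 < / (2 * INR N) by apply: Rinv_0_lt_compat; lra.
  have -> : INR s * ln (INR n) + - (INR M / INR N)
          = (INR s * (2 * INR N * ln (INR n)) - INR s * (INR s - 1)) * / (2 * INR N).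
    by rewrite /M INR_bin2; field; lra.
  nra.
have c0 : 0 <= 16 * INR 'C(n, s) by have := pos_INR 'C(n, s); lra.
have NM0 : 0 <= INR N ^ M by apply: pow_le; lra.
have e0 : 0 <= exp (- (INR M / INR N)) by have := exp_pos (- (INR M / INR N)); lra.
have -> : INR 16 = 16 by rewrite /=; lra.
apply: (Rle_trans _ _ _ (Rmult_le_compat_l _ _ _ c0 (pred_pow_le_exp M N0))).
apply: (Rle_trans _ (INR n ^ s * (INR N ^ M * exp (- (INR M / INR N))))).
  by apply: Rmult_le_compat_r => //; apply: Rmult_le_pos.
by have := Rmult_le_compat_l _ _ _ NM0 hexp; lra.
Qed.

Lemma dense_rare_condition n N w E (rho : R) : (0 < n)%N -> (4 <= w)%N -> (0 < E)%N -> 0 <= rho ->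
  exp 1 * INR 'C(w, 2) <= rho * INR N * INR E ->
  INR n ^ w.+1 * rho ^ E <= 1 ->
  (8 * n * 'C(n, w) * 'C('C(w, 2), E) <= N ^ E)%N.
Proof.
move=> n0 w4 E0 rho0 hM hn; apply: leq_INR; rewrite !INR_muln !INR_expn.
have E0R : 0 < INR E by apply: lt_0_INR; lia.
have n0R := pos_INR n; have N0R := pos_INR N.
have hC : 8 * INR 'C(n, w) <= INR n ^ w.
  by have := bin_le_pow_ge4 n w4; have := pos_INR 'C(n, w); lra.
have hCE : INR 'C('C(w, 2), E) <= (rho * INR N) ^ E.
  apply: Rle_trans (bin_le_exp_ratio_pow _ E0) _; apply: pow_incr; split.
    have := exp_pos 1; have := pos_INR 'C(w, 2); have := Rinv_0_lt_compat _ E0R.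
    by rewrite /Rdiv; move=> *; apply: Rmult_le_pos; [apply: Rmult_le_pos|]; lra.
  apply: (Rmult_le_reg_r (INR E)) => //.
  by rewrite /Rdiv Rmult_assoc Rinv_l ?Rmult_1_r; lra.
have ce0 := pos_INR 'C('C(w, 2), E).
have -> : INR 8 = 8 by rewrite /=; lra.
apply: (Rle_trans _ (INR n * INR n ^ w * (rho * INR N) ^ E)).
  rewrite (_ : 8 * _ * _ * _ = INR n * (8 * INR 'C(n, w) * INR 'C('C(w, 2), E))); last by ring.
  rewrite [X in _ <= X]Rmult_assoc; apply: Rmult_le_compat_l => //.
  by apply: Rmult_le_compat => //; have := pos_INR 'C(n, w); lra.
have NE0 : 0 <= INR N ^ E by apply: pow_le.
rewrite Rpow_mult_distr -[INR n * _]/(INR n ^ w.+1) -Rmult_assoc.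
by have := Rmult_le_compat_r _ _ _ NE0 hn; lra.
Qed.

Lemma locally_ramsey_le (T : finType) (e : rel T) m r r' :
  r' <= r -> locally_ramsey e m r -> locally_ramsey e m r'.
Proof.
move=> rr' hram S hS; have [[K [sKS [cK hK]]] [I [sIS [iI hI]]]] := hram S hS.
by split; [exists K | exists I]; do !split => //; lra.
Qed.

Lemma locally_ramsey_ceil_order (T : finType) (e : rel T) m r (k : nat) :
  INR k < r + 1 -> locally_ramsey e m r -> locally_ramsey e m (INR k).
Proof.
move=> hk hram S hS; have [[K [sKS [cK hK]]] [I [sIS [iI hI]]]] := hram S hS.
by split; [exists K | exists I]; do !split => //; apply/INR_leq/(leq_of_ceil hk).
Qed.

Lemma locally_ramsey_ceil_size (T : finType) (e : rel T) m r (s : nat) :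
  INR s < m + 1 -> locally_ramsey e (INR s) r -> locally_ramsey e m r.
Proof. by move=> hs hram S hS; apply/hram/INR_leq/(leq_of_ceil hs). Qed.

Lemma colour_sparse_indep (T C : finType) (f : {ffun {set T} -> C}) a k d (K : {set T}) :
  (0 < d)%N -> f \notin colour_dense k d a -> (k <= #|K|)%N ->
  exists2 J : {set T}, J \subset K & is_indep (colour_graph f a) J /\ INR k / INR d <= INR #|J|.
Proof.
move=> d0 hf kK; have [K0 sK0K K0k] := exists_subset_card kK.
have [J sJK0 [iJ hJ]] := degenerate_indep (colour_graph_sym f a)
  (colour_sparse_degenerate hf (eq_leq K0k)).
exists J; first exact: subset_trans sJK0 sK0K.
split=> //; move: hJ; rewrite K0k => /INR_leq; rewrite INR_muln => hJ.
have d0R : 0 < INR d by apply: lt_0_INR; lia.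
apply: (Rmult_le_reg_r (INR d)) => //.
by rewrite /Rdiv Rmult_assoc Rinv_l ?Rmult_1_r; lra.
Qed.

Section Recolouring.
Variables (T C : finType) (e : rel T) (f : {ffun {set T} -> C}) (a0 a1 : C).

Definition recolour : rel T :=
  fun u v => (u != v) && (e u v && (f [set u; v] != a1) || (f [set u; v] == a0)).

Lemma recolour_simple : symmetric e -> simple_graph recolour.
Proof.
move=> esym; split=> [u v|u]; last by rewrite /recolour eqxx.
by rewrite /recolour eq_sym esym setUC.
Qed.

Lemma recolour_locally_ramsey_large m k d : (0 < d)%N ->
  f \notin colour_dense k d a0 -> f \notin colour_dense k d a1 ->
  locally_ramsey e m (INR k) -> locally_ramsey recolour m (INR k / INR d).
Proof.
move=> d0 hf0 hf1 hram S hS.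
have [[K [sKS [cK /leq_INR hK]]] [I [sIS [iI /leq_INR hI]]]] := hram S hS.
split.
- have [J sJK [iJ hJ]] := colour_sparse_indep d0 hf1 hK.
  exists J; do !split => //; first exact: subset_trans sJK sKS.
  move=> x y xJ yJ xy; have := iJ x y xJ yJ xy.
  by rewrite /recolour /colour_graph xy cK ?(subsetP sJK) //= => ->.
- have [J sJI [iJ hJ]] := colour_sparse_indep d0 hf0 hI.
  exists J; do !split => //; first exact: subset_trans sJI sIS.
  move=> x y xJ yJ xy; have := iJ x y xJ yJ xy.
  by rewrite /recolour /colour_graph xy (negbTE (iI x y _ _ xy)) ?(subsetP sJI).
Qed.

Lemma recolour_locally_ramsey_pairs s : symmetric e -> a0 != a1 ->
  f \notin colour_avoiding s a0 -> f \notin colour_avoiding s a1 ->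
  locally_ramsey recolour (INR s) 2.
Proof.
move=> esym a01 hf0 hf1 S /leq_INR sS; have [rsym _] := recolour_simple esym.
have pairS u v : u \in S -> v \in S -> [set u; v] \subset S.
  by move=> uS vS; rewrite subUset !sub1set uS vS.
have card2 u v : u != v -> 2 <= INR #|[set u; v]| by rewrite cards2 => ->; rewrite /=; lra.
split.
- have [u [v [uS vS /andP[uv fa]]]] := colour_edge_in_large_set hf0 sS.
  exists [set u; v]; do !split; [exact: pairS | | exact: card2].
  by apply: pair_clique => //; rewrite /recolour uv fa orbT.
- have [u [v [uS vS /andP[uv /eqP fa]]]] := colour_edge_in_large_set hf1 sS.
  exists [set u; v]; do !split; [exact: pairS | | exact: card2].
  by apply: pair_indep => //; rewrite /recolour uv fa eqxx andbF eq_sym (negbTE a01).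
Qed.

End Recolouring.

Lemma exists_locally_ramsey_recolouring (T C : finType) (e : rel T) n N m s k d :
  symmetric e -> #|T| = n -> #|C| = N -> (0 < n)%N -> (1 < N)%N -> (0 < d)%N ->
  (16 * 'C(n, s) * N.-1 ^ 'C(s, 2) <= N ^ 'C(s, 2))%N ->
  (forall w, 0 < w <= k ->
     8 * n * 'C(n, w) * 'C('C(w, 2), uphalf (w * d)) <= N ^ uphalf (w * d))%N ->
  locally_ramsey e m (INR k) ->
  exists e' : rel T, [/\ simple_graph e', locally_ramsey e' m (INR k / INR d)
                       & locally_ramsey e' (INR s) 2].
Proof.
move=> esym <- <- T0 C1 d0 hs hk hram.
have [a0 [a1 [_ _ a01]]] := card_gt1P C1.
have [f [hA0 hA1 hD0 hD1]] := exists_good_colouring a0 a1 T0 hs hk.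
exists (recolour e f a0 a1); split.
- exact: recolour_simple.
- exact: recolour_locally_ramsey_large.
- exact: recolour_locally_ramsey_pairs.
Qed.

(* [estimate_dense] applies [dense_rare_condition] with rho = 105/128, which satisfies
   rho^8 <= 1/4 and 3 r <= rho N d, since r < 35/8 N L and d >= 16 L. *)
Section Estimates.
Variables (n : nat) (r : R) (N : nat).
Let L := log2 (INR n).
Hypotheses (n2 : (2 <= n)%N) (hr : 16 * L <= r)
  (hN : INR N <= r / (7 / 2 * L) < INR N + 1).

Let L1 : 1 <= L := log2_ge1 n2.

Let lnL : ln (INR n) = L * ln 2.
Proof. by rewrite /L /log2; field; have := ln2_gt0; lra. Qed.

Let NL : INR N * (7 / 2 * L) <= r < (INR N + 1) * (7 / 2 * L).
Proof.
have L0 : 0 < 7 / 2 * L by lra.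
have e : r / (7 / 2 * L) * (7 / 2 * L) = r by field; lra.
by split; [rewrite -e; apply: Rmult_le_compat_r | rewrite -{1}e; apply: Rmult_lt_compat_r]; lra.
Qed.

Lemma estimate_colours_ge4 : (4 <= N)%N.
Proof.
apply: (@leq_of_ceil _ _ (7 / 2)); first by rewrite /=; lra.
by have [_ ?] := NL; nra.
Qed.

Lemma estimate_avoiding s : r / 2 <= INR s ->
  (16 * 'C(n, s) * N.-1 ^ 'C(s, 2) <= N ^ 'C(s, 2))%N.
Proof.
move=> hs; have N4 := estimate_colours_ge4; have l2le := ln2_le.
apply: avoiding_rare_condition; [lia | lia | apply: (@leq_of_ceil _ _ 4) => /=; lra |].
rewrite lnL; have := INR_leq N4; rewrite /=; nra.
Qed.

Variable d : nat.
Hypothesis hd : INR d <= 17 * L < INR d + 1.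

Let d16 : 16 * L <= INR d.
Proof. lra. Qed.

Lemma estimate_dense_ratio w E : INR w < r + 1 -> INR w * INR d <= 2 * INR E ->
  exp 1 * INR 'C(w, 2) <= 105 / 128 * INR N * INR E.
Proof.
move=> wr wdE; have N0 := pos_INR N; have w0 := pos_INR w.
have := exp_le_3; have := exp_pos 1 => e0 e3.
have rNL : r <= 35 / 8 * (INR N * L).
  by have := INR_leq estimate_colours_ge4; have [_ ?] := NL; rewrite /=; nra.
have h1 : INR 'C(w, 2) <= INR w * r / 2 by rewrite INR_bin2; nra.
have := Rmult_le_compat _ _ _ _ (Rlt_le _ _ e0) (pos_INR _) e3 h1.
have rd : 3 * r <= 105 / 128 * INR N * INR d.
  by have := Rmult_le_compat_l _ _ _ N0 d16; lra.
have := Rmult_le_compat_l (INR w / 2) _ _ ltac:(lra) rd.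
have := Rmult_le_compat_l (105 / 128 * INR N) _ _ ltac:(lra) wdE.
lra.
Qed.

Lemma estimate_dense_power w E : 1 <= INR w -> INR w * INR d <= 2 * INR E ->
  INR n ^ w.+1 * (105 / 128) ^ E <= 1.
Proof.
move=> w1 wdE; have E0 := pos_INR E.
rewrite !pow_exp_ln; [|lra | apply: lt_0_INR; lia].
rewrite -exp_plus -exp_0; apply: exp_le.
have ln_rho := Rmult_le_compat_l _ _ _ E0 ln_105_128_le.
have wL : 8 * L * INR w <= INR E.
  by have := Rmult_le_compat_l _ _ _ (pos_INR w) d16; lra.
have wL1 : (INR w + 1) * L <= INR E / 4.
  by have := Rmult_le_compat_l L _ _ ltac:(lra) w1; lra.
have := Rmult_le_compat_l _ _ _ (Rlt_le _ _ ln2_gt0) wL1.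
rewrite S_INR lnL; lra.
Qed.

Lemma estimate_dense k : INR k < r + 1 -> forall w, (0 < w <= k)%N ->
  (8 * n * 'C(n, w) * 'C('C(w, 2), uphalf (w * d)) <= N ^ uphalf (w * d))%N.
Proof.
move=> hk w /andP[w0 wk]; set E := uphalf (w * d).
have [EM|/bin_small->] := leqP E 'C(w, 2); last by rewrite muln0.
have wdE : (w * d <= 2 * E)%N by rewrite /E mul2n uphalfK leq_addl.
have d16n : (16 <= d)%N by apply: (@leq_of_ceil _ _ 16) => /=; lra.
have w4 : (4 <= w)%N.
  have := leq_trans wdE (leq_mul (leqnn 2) EM); rewrite [(2 * _)%N]mulnC bin2_mul2.
  by rewrite leq_mul2l; case/orP; lia.
have wdER : INR w * INR d <= 2 * INR E.
  by have := INR_leq wdE; rewrite !INR_muln /=; lra.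
apply: (@dense_rare_condition _ _ _ _ (105 / 128)); [lia | lia | | lra | |].
- by rewrite /E uphalf_gt0; lia.
- by apply: estimate_dense_ratio => //; have := INR_leq wk; lra.
- by apply: estimate_dense_power => //; have := INR_leq w0; rewrite /=; lra.
Qed.

End Estimates.

Theorem lemma3p1 (n : nat) (m r : R) :
  (2 <= n)%N -> 0 < m -> 0 < r ->
  16 * log2 (INR n) <= r ->
  (exists e : rel 'I_n, simple_graph e /\ locally_ramsey e m r) ->
  exists e' : rel 'I_n, simple_graph e' /\
    locally_ramsey e' m (r / (17 * log2 (INR n))) /\
    locally_ramsey e' (r / 2) 2.
Proof.
move=> n2 _ r0 hr [e [[esym _] hram]].
have L1 := log2_ge1 n2; set L := log2 (INR n) in hr L1 *.
have [N hN] := @exists_floor_nat (r / (7 / 2 * L)) ltac:(apply: Rle_mult_inv_pos; lra).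
have [d hd] := @exists_floor_nat (17 * L) ltac:(lra).
have [k hk] := @exists_ceil_nat r ltac:(lra).
have [s hs] := @exists_ceil_nat (r / 2) ltac:(lra).
have d0 : (0 < d)%N by apply: (@leq_of_ceil _ _ 1); rewrite /=; lra.
have N1 : (1 < N)%N by have := estimate_colours_ge4 n2 hr hN; lia.
have [e' [se' large pairs]] := exists_locally_ramsey_recolouring esym (card_ord n) (card_ord N)
  (ltnW n2) N1 d0 (estimate_avoiding n2 hr hN (proj1 hs)) (estimate_dense n2 hr hN hd (proj2 hk))
  (locally_ramsey_ceil_order (proj2 hk) hram).
exists e'; split=> //; split; last exact: locally_ramsey_ceil_size (proj2 hs) pairs.
apply: locally_ramsey_le large; rewrite /Rdiv.
apply: Rmult_le_compat; [lra | apply/Rlt_le/Rinv_0_lt_compat; lra | lra |].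
by apply: Rinv_le_contravar; [apply: lt_0_INR; lia | lra].
Qed.
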